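(* Let $d\ge1$ and let $F$ be a modular form of odd weight $2k+1$ (with trivial character) for $\widetilde{\mathrm{SO}}^+(L_{2d})$. Then for every primitive $r\in L_{2d}$ with $r^2=-2d$ such that the reflection $\sigma_r$ lies in $\mathrm O(L_{2d})$, $F$ vanishes on the divisor $\{[Z]\in\mathcal D_{L_{2d}}\mid (Z,r)=0\}$.
   Context: $L_{2d}=2U\oplus2E_8(-1)\oplus\langle-2d\rangle$. $\mathcal D_{L_{2d}}$ is one of the two components of $\{[w]\in\mathbb P(L_{2d}\otimes\mathbb C)\mid (w,w)=0,(w,\bar w)>0\}$. $\widetilde{\mathrm{SO}}^+(L_{2d})$ consists of elements of $\mathrm{SO}(L_{2d})$ preserving $\mathcal D_{L_{2d}}$ and acting trivially on $L_{2d}^\vee/L_{2d}$. A modular form of weight $m$ is a holomorphic function $F$ on the affine cone over $\mathcal D_{L_{2d}}$ with $F(tZ)=t^{-m}F(Z)$ for $t\in\mathbb C^*$ and $F(gZ)=F(Z)$ for $g$ in the group. $\sigma_r(x)=x-\frac{2(x,r)}{(r,r)}r$. *)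

From HB Require Import structures.
From mathcomp Require Import all_boot all_order all_algebra.
From mathcomp Require Import complex Rstruct.
From Stdlib Require Rdefinitions.

Set Implicit Arguments.
Unset Strict Implicit.
Unset Printing Implicit Defensive.
Import Order.TTheory GRing.Theory Num.Theory.
Local Open Scope ring_scope.

Definition C : numClosedFieldType := complex Rdefinitions.R.

(* Rank of L_{2d} = 2U + 2E8(-1) + <-2d>  :  2+2+8+8+1 = 21. *)
Definition rk : nat := 21.

(* E8 Dynkin diagram on nodes 0..7: chain 0-1-2-3-4-5-6 and node 7 attached
   to node 4 (arms of lengths 4, 2, 1 from the branch node 4). *)
Definition e8adj (i j : nat) : bool :=
  ((i <= 6) && (j <= 6) && ((i == j.+1) || (j == i.+1)))%N
  || ((i == 4) && (j == 7))%N || ((i == 7) && (j == 4))%N.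

(* Gram matrix in the basis
   0,1 : e1,f1 (first U);  2,3 : e2,f2 (second U);
   4..11 : simple roots of the first E8(-1);  12..19 : of the second E8(-1);
   20 : generator h of <-2d>. *)
Definition gramf (d : nat) (i j : nat) : int :=
  if i == j then
    (if (i < 4)%N then 0 else if (i < 20)%N then -2 else - ((2 * d)%N : int))
  else if [|| (i == 0) && (j == 1), (i == 1) && (j == 0),
              (i == 2) && (j == 3) | (i == 3) && (j == 2)]%N then 1
  else if [&& 4 <= i, i < 12, 4 <= j, j < 12 & e8adj (i - 4) (j - 4)]%N then 1
  else if [&& 12 <= i, i < 20, 12 <= j, j < 20 & e8adj (i - 12) (j - 12)]%N
  then 1
  else 0.

Definition gram (d : nat) : 'M[int]_rk := \matrix_(i < rk, j < rk) gramf d i j.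

Definition lat := 'cV[int]_rk.

Definition toQ (x : 'cV[int]_rk) : 'cV[rat]_rk := map_mx intr x.
Definition toC (x : 'cV[int]_rk) : 'cV[C]_rk := map_mx intr x.
Definition toCm (g : 'M[int]_rk) : 'M[C]_rk := map_mx intr g.

Definition LformZ d (x y : 'cV[int]_rk) : int := (x^T *m gram d *m y) 0 0.
Definition LformQ d (x y : 'cV[rat]_rk) : rat :=
  (x^T *m map_mx intr (gram d) *m y) 0 0.
Definition LformC d (x y : 'cV[C]_rk) : C :=
  (x^T *m map_mx intr (gram d) *m y) 0 0.

(* Fixed positive definite 2-plane <p1,p2>, p1 = e1+f1, p2 = e2+f2, used to
   fix one of the two connected components (an orientation choice). *)
Definition p1 : 'cV[C]_rk := \col_(i < rk) (if (i < 2)%N then 1 else 0).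
Definition p2 : 'cV[C]_rk :=
  \col_(i < rk) (if (2 <= i < 4)%N then 1 else 0).

(* Affine cone D^bullet over D_{L_{2d}}:  nonzero Z with (Z,Z)=0,
   (Z, Zbar) > 0, and [Re Z, Im Z] positively oriented w.r.t. (p1,p2).
   ((Z,Z)=0 and (Z,Zbar)>0 already force Z != 0.) *)
Definition in_cone d (Z : 'cV[C]_rk) : Prop :=
  [/\ LformC d Z Z = 0,
      0 < LformC d Z (map_mx Num.conj Z)
    & 0 < 'Re (LformC d Z p1) * 'Im (LformC d Z p2)
          - 'Re (LformC d Z p2) * 'Im (LformC d Z p1)].

Definition in_dual d (v : 'cV[rat]_rk) : Prop :=
  forall w : 'cV[int]_rk, exists z : int, LformQ d v (toQ w) = z%:~R.

Definition acts_trivially_on_discr d (g : 'M[int]_rk) : Prop :=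
  forall v : 'cV[rat]_rk, in_dual d v ->
    exists u : 'cV[int]_rk, map_mx intr g *m v - v = toQ u.

(* tilde SO^+(L_{2d}) : integral isometries of determinant 1 preserving the
   component D (hence its cone), acting trivially on L^vee/L. *)
Definition in_SOtilde_plus d (g : 'M[int]_rk) : Prop :=
  [/\ g^T *m gram d *m g = gram d,
      \det g = 1,
      (forall Z : 'cV[C]_rk, in_cone d Z <-> in_cone d (toCm g *m Z))
    & acts_trivially_on_discr d g].

(* Separate holomorphy (complex partial derivatives in every coordinate) of
   G at every point of the polydisc of radius rho around Z0; by Hartogs'
   theorem this is holomorphy on that open polydisc.  Radii eps, delta, rho
   are elements of C with 0 < _, i.e. positive reals. *)
Definition near (rho : C) (Z0 Z : 'cV[C]_rk) : Prop :=
  forall i, `|Z i 0 - Z0 i 0| < rho.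

Definition coord_vec (i : 'I_rk) : 'cV[C]_rk := delta_mx i 0.

Definition holo_on_polydisc (G : 'cV[C]_rk -> C) (Z0 : 'cV[C]_rk) (rho : C) :=
  forall Z, near rho Z0 Z -> forall i : 'I_rk,
    exists c : C, forall eps : C, 0 < eps -> exists delta : C, 0 < delta /\
      forall h : C, h != 0 -> `|h| < delta ->
        `|(G (Z + h *: coord_vec i) - G Z) / h - c| < eps.

Definition holomorphic_on_cone d (F : 'cV[C]_rk -> C) : Prop :=
  forall Z0, in_cone d Z0 -> exists rho : C, 0 < rho /\
    exists G : 'cV[C]_rk -> C, holo_on_polydisc G Z0 rho /\
      forall Z, in_cone d Z -> near rho Z0 Z -> F Z = G Z.

Definition modular_form d (m : nat) (F : 'cV[C]_rk -> C) : Prop :=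
  [/\ holomorphic_on_cone d F,
      (forall (t : C) Z, t != 0 -> in_cone d Z -> F (t *: Z) = t ^- m * F Z)
    & (forall g Z, in_SOtilde_plus d g -> in_cone d Z ->
         F (toCm g *m Z) = F Z)].

Definition primitive (r : 'cV[int]_rk) : Prop :=
  forall (a : int) (v : 'cV[int]_rk), r = a *: v -> `|a| = 1.

Definition refl_mx d (r : 'cV[int]_rk) : 'M[rat]_rk :=
  1%:M - (2 / (LformZ d r r)%:~R) *: (toQ r *m (toQ r)^T *m map_mx intr (gram d)).

Definition in_OL d (M : 'M[rat]_rk) : Prop :=
  [/\ M^T *m map_mx intr (gram d) *m M = map_mx intr (gram d),
      (forall x : 'cV[int]_rk, exists y : 'cV[int]_rk, M *m toQ x = toQ y)
    & (forall y : 'cV[int]_rk, exists x : 'cV[int]_rk, M *m toQ x = toQ y)].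

(* Let g = -sigma_r.  Then g lies in the discriminant kernel SO~^+(L_2d):
   - it is an integral isometry (sigma_r is in O(L)) of determinant
     (-1)^21 * det sigma_r = 1;
   - it acts trivially on L^v/L: reflectivity forces r/d in L^v, so r = d s + m h
     with s in the unimodular part 2U + 2E8(-1) and h the generator of <-2d>,
     and r^2 = -2d together with the evenness of L gives m^2 = 1 mod d, which is
     exactly what makes g v - v integral for v in L^v;
   - it preserves the component D: -1 does, and sigma_r does because the path
     v - t (2 (v,r)/(r,r)) r, t in [0, 1], deforms the identity into sigma_r
     without the orientation of the positive plane (Re Z, Im Z) ever degenerating,
     the orthogonal complement of the positive definite plane <e1+f1, e2+f2>
     being negative semidefinite.
   If (Z, r) = 0 then g Z = -Z, so F(Z) = F(g Z) = F(-Z) = (-1)^-(2k+1) F(Z) = -F(Z). *)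

From mathcomp Require Import all_boot all_order all_algebra.
From mathcomp Require Import complex Rstruct.
From mathcomp Require Import ring lra.
Set Implicit Arguments. Unset Strict Implicit. Unset Printing Implicit Defensive.
Import Order.TTheory GRing.Theory Num.Theory.
Local Open Scope ring_scope.

Local Notation RR := Rdefinitions.R.

Section GramForm.
Variables (R : comNzRingType) (n : nat).
Implicit Types (G g : 'M[R]_n) (x y z : 'cV[R]_n) (a : R).

Definition bform G x y : R := (x^T *m G *m y) 0 0.
Arguments bform : simpl never.

Lemma bformDl G x y z : bform G (x + y) z = bform G x z + bform G y z.
Proof. by rewrite /bform linearD /= !mulmxDl mxE. Qed.

Lemma bformDr G x y z : bform G x (y + z) = bform G x y + bform G x z.
Proof. by rewrite /bform !mulmxDr mxE. Qed.

Lemma bformZl G a x y : bform G (a *: x) y = a * bform G x y.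
Proof. by rewrite /bform linearZ /= -!scalemxAl mxE. Qed.

Lemma bformZr G a x y : bform G x (a *: y) = a * bform G x y.
Proof. by rewrite /bform -!scalemxAr mxE. Qed.

Lemma bformNl G x y : bform G (- x) y = - bform G x y.
Proof. by rewrite -scaleN1r bformZl mulN1r. Qed.

Lemma bformNr G x y : bform G x (- y) = - bform G x y.
Proof. by rewrite -scaleN1r bformZr mulN1r. Qed.

Lemma bformBl G x y z : bform G (x - y) z = bform G x z - bform G y z.
Proof. by rewrite bformDl bformNl. Qed.

Lemma bformBr G x y z : bform G x (y - z) = bform G x y - bform G x z.
Proof. by rewrite bformDr bformNr. Qed.

Lemma bform_trmx G x y : bform G^T x y = bform G y x.
Proof.
rewrite /bform -[y^T *m G *m x]trmxK [RHS]mxE.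
by rewrite !trmx_mul !trmxK mulmxA.
Qed.

Lemma bform_sym G : G^T = G -> forall x y, bform G x y = bform G y x.
Proof. by move=> sG x y; rewrite -bform_trmx sG. Qed.

Lemma bform_iso G g x y :
  g^T *m G *m g = G -> bform G (g *m x) (g *m y) = bform G x y.
Proof. by move=> gG; rewrite /bform trmx_mul -{2}gG !mulmxA. Qed.

Lemma bform_sum G x y :
  bform G x y = \sum_j (\sum_i x i 0 * G i j) * y j 0.
Proof.
by rewrite /bform mxE; apply: eq_bigr => j _; rewrite mxE; congr (_ * _);
  apply: eq_bigr => i _; rewrite mxE.
Qed.

Lemma det_rank1 (u : 'cV[R]_n) (w : 'rV[R]_n) :
  \det (1%:M - u *m w) = 1 - (w *m u) 0 0.
Proof.
pose L : 'M[R]_(n + 1) := block_mx 1%:M 0 (- w) 1%:M.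
have detL : \det L = 1 by rewrite det_lblock !det1 mulr1.
have /(congr1 determinant) : block_mx 1%:M u w 1%:M *m L =
    block_mx (1%:M - u *m w) u 0 1%:M.
  by rewrite mulmx_block !mul1mx !mulmx1 !mulmx0 mulmxN !add0r subrr.
rewrite det_mulmx detL mulr1 det_ublock det1 mulr1 => <-.
have /(congr1 determinant) : L *m block_mx 1%:M u w 1%:M =
    block_mx 1%:M u 0 (1%:M - w *m u).
  by rewrite mulmx_block !mul1mx !mulmx1 !mul0mx mulNmx !addr0 addNr addrC.
by rewrite det_mulmx detL mul1r det_ublock det1 mul1r det_mx11 !mxE => ->.
Qed.

Lemma bform_addmx G H x y :
  bform (G + H) x y = bform G x y + bform H x y.
Proof. by rewrite /bform mulmxDr mulmxDl mxE. Qed.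

End GramForm.

Lemma bform_map (R S : comNzRingType) n (f : {rmorphism R -> S}) (G : 'M[R]_n)
    (x y : 'cV[R]_n) :
  bform (map_mx f G) (map_mx f x) (map_mx f y) = f (bform G x y).
Proof. by rewrite /bform map_trmx -!map_mxM mxE. Qed.

Definition refl_path (K : fieldType) n (G : 'M[K]_n) (r : 'cV[K]_n) (t : K)
    (v : 'cV[K]_n) : 'cV[K]_n :=
  v - (t * (2 * bform G v r / bform G r r)) *: r.

Lemma affine_root (K : realFieldType) (f0 f1 : K) : 0 < f0 -> f1 <= 0 ->
  exists2 t, 0 <= t <= 1 & f0 + t * (f1 - f0) = 0.
Proof.
move=> f0_gt0 f1_le0; have f01_gt0 : 0 < f0 - f1 by lra.
exists (f0 / (f0 - f1)); last by field; rewrite gt_eqF.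
apply/andP; split; first by rewrite divr_ge0 ?ltW.
by rewrite ler_pdivrMr // mul1r; lra.
Qed.

Lemma affine_pos_iff (K : realFieldType) (f0 f1 : K) :
  (forall t, 0 <= t <= 1 -> f0 + t * (f1 - f0) != 0) -> (0 < f0) = (0 < f1).
Proof.
move=> nz; apply/idP/idP => pos; rewrite ltNge; apply/negP => npos.
  by have [t t01 root] := affine_root pos npos; move: (nz t t01); rewrite root eqxx.
have [t /andP[t0 t1] root] := affine_root pos npos.
have t01 : 0 <= 1 - t <= 1 by apply/andP; split; lra.
have := nz _ t01.
have -> : f0 + (1 - t) * (f1 - f0) = f1 + t * (f0 - f1) by ring.
by rewrite root eqxx.
Qed.

Lemma singular2_kernel (F : fieldType) (a b c e : F) : a * e - c * b = 0 ->
  exists al be : F, [/\ (al != 0) || (be != 0), al * a + be * b = 0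
                      & al * c + be * e = 0].
Proof.
move=> det0; case: (boolP ((a == 0) && (b == 0))) => [/andP[/eqP a0 /eqP b0]|nab].
  case: (boolP ((c == 0) && (e == 0))) => [/andP[/eqP c0 /eqP e0]|nce].
    by exists 1, 0; rewrite oner_neq0 a0 b0 c0 e0; split => //; ring.
  exists e, (- c); rewrite oppr_eq0 orbC -negb_and nce a0 b0; split => //; ring.
exists b, (- a); rewrite oppr_eq0 orbC -negb_and nab; split; first by [].
  by ring.
by rewrite -[RHS]oppr0 -det0; ring.
Qed.

Section Orientation.
Variables (K : realFieldType) (n : nat) (G : 'M[K]_n) (w1 w2 : 'cV[K]_n).
Hypothesis G_sym : G^T = G.
Hypothesis perp_nonpos :
  forall u, bform G u w1 = 0 -> bform G u w2 = 0 -> bform G u u <= 0.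
Implicit Types (r x y A B : 'cV[K]_n) (t : K).

Definition orient x y : K :=
  bform G x w1 * bform G y w2 - bform G x w2 * bform G y w1.

Lemma orientNN x y : orient (- x) (- y) = orient x y.
Proof. by rewrite /orient !bformNl; ring. Qed.

Local Notation sigma := (refl_path G).

Lemma orient_refl_path r t A B :
  orient (sigma r t A) (sigma r t B) =
  orient A B + t * (orient (sigma r 1 A) (sigma r 1 B) - orient A B).
Proof. by rewrite /orient /refl_path !bformBl !bformZl; ring. Qed.

Lemma orient_refl_path_neq0 r t A B :
  bform G r r < 0 -> bform G A A = bform G B B -> bform G A B = 0 ->
  0 < bform G A A -> 0 <= t <= 1 -> orient (sigma r t A) (sigma r t B) != 0.
Proof.
move=> r_neg AB_eq AB_orth A_pos /andP[t0 t1]; apply/eqP => /singular2_kernel.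
case=> al [be] [al_be_nz perp1 perp2].
(* u is orthogonal to w1 and w2, yet (u, u) > 0 because (r, r) < 0 and
   t (1 - t) >= 0. *)
set u := al *: sigma r t A + be *: sigma r t B.
have u_nonpos : bform G u u <= 0 by apply: perp_nonpos; rewrite !bformDl !bformZl.
set N := bform G r r; set c := al * bform G A r + be * bform G B r.
rewrite -/N in r_neg.
have u_val : bform G u u =
    (al ^+ 2 + be ^+ 2) * bform G A A - N * t * (1 - t) * (2 * c / N) ^+ 2.
  rewrite /u /refl_path !bformDl !bformDr !bformZl !bformZr !bformBl !bformBr.
  rewrite !bformZl !bformZr -/N (bform_sym G_sym r A) (bform_sym G_sym r B).
  rewrite (bform_sym G_sym B A) AB_orth -AB_eq /c; field.
  by rewrite lt_eqF.
have sq_pos : 0 < al ^+ 2 + be ^+ 2.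
  have [al2 be2] := (sqr_ge0 al, sqr_ge0 be).
  case/orP: al_be_nz => nz.
    have : 0 < al ^+ 2 by rewrite lt0r sqrf_eq0 nz al2.
    lra.
  have : 0 < be ^+ 2 by rewrite lt0r sqrf_eq0 nz be2.
  lra.
have : 0 <= - N * t * (1 - t) * (2 * c / N) ^+ 2.
  apply: mulr_ge0; last exact: sqr_ge0.
  by apply: mulr_ge0; [apply: mulr_ge0|]; lra.
have := mulr_gt0 sq_pos A_pos; rewrite u_val in u_nonpos; lra.
Qed.

Lemma orient_refl_pos r A B :
  bform G r r < 0 -> bform G A A = bform G B B -> bform G A B = 0 ->
  0 < bform G A A -> (0 < orient A B) = (0 < orient (sigma r 1 A) (sigma r 1 B)).
Proof.
move=> r_neg AB_eq AB_orth A_pos; apply: affine_pos_iff => t t01.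
by rewrite -orient_refl_path orient_refl_path_neq0.
Qed.

End Orientation.

Lemma bform_even n (G : 'M[int]_n) : G^T = G -> (forall i, (2 %| G i i)%Z) ->
  forall x, (2 %| bform G x x)%Z.
Proof.
move=> G_sym G_even x.
pose H := \matrix_(i, j)
  if (i < j)%N then G i j else if i == j then (G i i %/ 2)%Z else 0.
have -> : G = H + H^T.
  apply/matrixP => i j; rewrite !mxE.
  case: ltngtP => [ij|ji|/val_inj ->].
  - by case: eqP => [ji|_]; [move: ij; rewrite ji ltnn | rewrite addr0].
  - case: eqP => [ij|_]; first by move: ji; rewrite ij ltnn.
    by rewrite add0r -{1}G_sym mxE.
  - by rewrite eqxx -{1}(divzK (G_even j)); ring.
by rewrite bform_addmx bform_trmx; apply/dvdzP; exists (bform H x x); ring.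
Qed.

Lemma e8adj_sym a b : e8adj a b = e8adj b a.
Proof.
by rewrite /e8adj [in RHS]orbAC [(b <= 6)%N && _]andbC [(b == a.+1) || _]orbC
  [(b == 4%N) && _]andbC [(b == 7%N) && _]andbC.
Qed.

Lemma gramf_sym d i j : gramf d i j = gramf d j i.
Proof.
rewrite /gramf eq_sym; case: eqP => [-> //|_].
rewrite (e8adj_sym (i - 4)) (e8adj_sym (i - 12)).
have if_congr b1 b2 (x y : int) :
  b1 = b2 -> x = y -> (if b1 then 1 else x) = (if b2 then 1 else y) by move=> -> ->.
apply: (if_congr).
  rewrite [(j == 0%N) && _]andbC [(j == 1%N) && _]andbC.
  by rewrite [(j == 2%N) && _]andbC [(j == 3%N) && _]andbC orbCA [_ || _ && _]orbC.
by do 2 (apply: (if_congr) => //; first by apply/and5P/and5P => -[? ? ? ? ?]).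
Qed.

Lemma gramf_offdiag d i j :
  i != j -> gramf d i j = if gramf 0 i j == 1 then 1 else 0.
Proof. by move=> ij; rewrite /gramf (negbTE ij); do 3 (case: ifP => // _). Qed.

Definition gram_nbrs (j : nat) : seq nat :=
  [seq i <- iota 0 rk | (i != j) && (gramf 0 i j == 1)].

Notation bf d := (bform (map_mx intr (gram d))).

Definition coord (R : Type) (x : 'cV[R]_rk) (i : nat) : R := x (inord i) 0.
Arguments coord : simpl never.

Definition evec (R : comNzRingType) (j : nat) : 'cV[R]_rk := delta_mx (inord j) 0.
Arguments evec {R} j.

Lemma ord_lt20_neq (i : 'I_rk) : (i < 20)%N -> (i == inord 20) = false.
Proof. by move=> lt_i20; rewrite -val_eqE /= inordK // ltn_eqF. Qed.

Lemma ord_ge20 (i : 'I_rk) : (20 <= i)%N -> i = inord 20.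
Proof.
by move=> ge_i20; apply: val_inj; rewrite /= inordK //; apply/eqP;
  rewrite eqn_leq ge_i20 -ltnS ltn_ord.
Qed.

Lemma gram_diag_even d (i : 'I_rk) : (2 %| gram d i i)%Z.
Proof.
by rewrite mxE /gramf eqxx; case: ifP => _; [|case: ifP => _];
  rewrite dvdzE ?abszN ?dvdn_mulr.
Qed.

Lemma gram_trmx d : (gram d)^T = gram d.
Proof. by apply/matrixP => i j; rewrite !mxE gramf_sym. Qed.

Section LatticeForm.
Variables (R : comNzRingType) (d : nat).
Implicit Types (x y : 'cV[R]_rk).

Lemma gram_sym : (map_mx intr (gram d) : 'M[R]_rk)^T = map_mx intr (gram d).
Proof. by rewrite map_trmx gram_trmx. Qed.

Lemma bf_sym x y : bf d x y = bf d y x.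
Proof. exact: bform_sym gram_sym x y. Qed.

Lemma sum_rk (F : 'I_rk -> R) : \sum_(i < rk) F i = \sum_(0 <= i < rk) F (inord i).
Proof. by rewrite big_mkord; apply: eq_bigr => i _; rewrite inord_val. Qed.

Lemma bf_delta x (j : 'I_rk) : bf d x (delta_mx j 0) = \sum_i x i 0 * (gram d i j)%:~R.
Proof.
rewrite bform_sum (bigD1 j) //= [X in _ + X]big1 => [|k kj].
  by rewrite mxE !eqxx mulr1 addr0; apply: eq_bigr => i _; rewrite mxE.
by rewrite mxE (negbTE kj) mulr0.
Qed.

Lemma bf_expand x y : bf d x y = \sum_(0 <= j < rk) bf d x (evec j) * coord y j.
Proof.
rewrite -(sum_rk (fun j => bf d x (delta_mx j 0) * y j 0)) bform_sum.
by apply: eq_bigr => j _; rewrite bf_delta; under eq_bigr do rewrite mxE.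
Qed.

Lemma bf_evec_sum x j : (j < rk)%N ->
  bf d x (evec j) = \sum_(0 <= i < rk) coord x i * (gramf d i j)%:~R.
Proof.
move=> lt_j; rewrite bf_delta sum_rk; apply: eq_big_nat => i /andP[_ lt_i].
by rewrite mxE !inordK.
Qed.

Lemma bf_evec x j : (j < rk)%N ->
  bf d x (evec j) = (gramf d j j)%:~R * coord x j + \sum_(i <- gram_nbrs j) coord x i.
Proof.
move=> lt_j; rewrite bf_evec_sum // (bigD1_seq j) ?mem_iota ?iota_uniq //= mulrC.
congr (_ + _); rewrite big_filter big_mkcond [RHS]big_mkcond /=.
apply: eq_bigr => i _; case: eqP => [-> //|/eqP ij] /=.
by rewrite gramf_offdiag //; case: ifP; rewrite ?mulr1 ?mulr0.
Qed.

End LatticeForm.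

Definition plane1 (R : comNzRingType) : 'cV[R]_rk := evec 0 + evec 1.
Definition plane2 (R : comNzRingType) : 'cV[R]_rk := evec 2 + evec 3.
Arguments plane1 {R}.
Arguments plane2 {R}.

Lemma bf_plane1 (R : comNzRingType) d (x : 'cV[R]_rk) :
  bf d x plane1 = coord x 0 + coord x 1.
Proof.
by rewrite /plane1 bformDr !bf_evec // /gram_nbrs /gramf /= !big_cons !big_nil; ring.
Qed.

Lemma bf_plane2 (R : comNzRingType) d (x : 'cV[R]_rk) :
  bf d x plane2 = coord x 2 + coord x 3.
Proof.
by rewrite /plane2 bformDr !bf_evec // /gram_nbrs /gramf /= !big_cons !big_nil; ring.
Qed.

Lemma bf_evec20 (R : comNzRingType) d (x : 'cV[R]_rk) :
  bf d x (evec 20) = - (2 * d)%:R * coord x 20.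
Proof. by rewrite bf_evec // /gram_nbrs /gramf /= big_nil addr0 mulrNz. Qed.

Lemma e8_edges_le_squares (K : realFieldType) (y0 y1 y2 y3 y4 y5 y6 y7 : K) :
  y0 * y1 + y1 * y2 + y2 * y3 + y3 * y4 + y4 * y5 + y5 * y6 + y4 * y7
  <= y0 ^+ 2 + y1 ^+ 2 + y2 ^+ 2 + y3 ^+ 2 + y4 ^+ 2 + y5 ^+ 2 + y6 ^+ 2 + y7 ^+ 2.
Proof.
(* The squares come from the LDL^T decomposition of the E8 Cartan matrix. *)
have := sqr_ge0 (y0 - y1 / 2); have := sqr_ge0 (y1 - 2 / 3 * y2).
have := sqr_ge0 (y2 - 3 / 4 * y3); have := sqr_ge0 (y3 - 4 / 5 * y4).
have := sqr_ge0 (y4 - 5 / 6 * y5 - 5 / 6 * y7).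
have := sqr_ge0 (y5 - 6 / 7 * y6 - 5 / 7 * y7).
have := sqr_ge0 (y6 - 5 / 8 * y7); have := sqr_ge0 y7.
by rewrite !expr2; lra.
Qed.

Lemma bf_perp_plane_nonpos (K : realFieldType) d (u : 'cV[K]_rk) :
  bf d u plane1 = 0 -> bf d u plane2 = 0 -> bf d u u <= 0.
Proof.
rewrite bf_plane1 bf_plane2 => /eqP; rewrite addr_eq0 => /eqP u0.
move=> /eqP; rewrite addr_eq0 => /eqP u2.
have := e8_edges_le_squares (coord u 4) (coord u 5) (coord u 6) (coord u 7)
  (coord u 8) (coord u 9) (coord u 10) (coord u 11).
have := e8_edges_le_squares (coord u 12) (coord u 13) (coord u 14) (coord u 15)
  (coord u 16) (coord u 17) (coord u 18) (coord u 19).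
have := sqr_ge0 (coord u 1); have := sqr_ge0 (coord u 3).
have : (- ((2 * d)%N : int))%:~R * coord u 20 ^+ 2 <= 0 :> K.
  by rewrite mulr_le0_ge0 ?sqr_ge0 // mulrNz oppr_le0 ler0z.
rewrite bf_expand /index_iota /= !big_cons big_nil.
rewrite !bf_evec // /gram_nbrs /gramf /= !big_cons !big_nil u0 u2.
rewrite !expr2; lra.
Qed.

(* The inverse of the Gram matrix of the unimodular summand 2U + 2E8(-1)
   (indices < 20); its E8 blocks are minus the inverse Cartan matrix, with the
   nodes numbered as in e8adj. *)
Definition e8_cartan_inv : seq (seq int) :=
  [:: [:: 2; 3; 4; 5; 6; 4; 2; 3];
      [:: 3; 6; 8; 10; 12; 8; 4; 6];
      [:: 4; 8; 12; 15; 18; 12; 6; 9];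
      [:: 5; 10; 15; 20; 24; 16; 8; 12];
      [:: 6; 12; 18; 24; 30; 20; 10; 15];
      [:: 4; 8; 12; 16; 20; 14; 7; 10];
      [:: 2; 4; 6; 8; 10; 7; 4; 5];
      [:: 3; 6; 9; 12; 15; 10; 5; 8]].

Definition unimod_gram_inv (i j : nat) : int :=
  if [&& i < 4, j < 4, i./2 == j./2 & i != j]%N then 1
  else if [&& 4 <= i, i < 12, 4 <= j & j < 12]%N then
    - (nth [::] e8_cartan_inv (i - 4))`_(j - 4)
  else if [&& 12 <= i, i < 20, 12 <= j & j < 20]%N then
    - (nth [::] e8_cartan_inv (i - 12))`_(j - 12)
  else 0.

Lemma unimod_gram_inv_mul d :
  all (fun i => all (fun k =>
    \sum_(0 <= j < 20) unimod_gram_inv i j * gramf d k j == (i == k)%:R) (iota 0 rk))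
    (iota 0 20).
Proof. by rewrite unlock; vm_compute. Qed.

Lemma coord_of_pairings (R : comNzRingType) d (x : 'cV[R]_rk) i : (i < 20)%N ->
  coord x i = \sum_(0 <= j < 20) (unimod_gram_inv i j)%:~R * bf d x (evec j).
Proof.
move=> lt_i20.
have inv_ik k : (k < rk)%N ->
    \sum_(0 <= j < 20) unimod_gram_inv i j * gramf d k j = (i == k)%:R.
  move=> lt_k; apply/eqP.
  have /allP/(_ i)/(_ _)/allP/(_ k) := unimod_gram_inv_mul d.
  by apply; rewrite mem_iota.
transitivity (\sum_(0 <= k < rk)
  coord x k * (\sum_(0 <= j < 20) unimod_gram_inv i j * gramf d k j)%:~R).
  rewrite (bigD1_seq i) ?mem_iota ?iota_uniq ?(ltn_trans lt_i20) //=.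
  rewrite inv_ik ?(ltn_trans lt_i20) // eqxx mulr1 big_seq_cond big1 ?addr0 // => k.
  rewrite mem_iota andbC => /andP[ki /andP[_ lt_k]].
  by rewrite inv_ik // eq_sym (negbTE ki) mulr0.
symmetry.
under eq_big_nat => j /andP[_ lt_j] do rewrite bf_evec_sum ?(ltn_trans lt_j) //.
under eq_bigr do rewrite big_distrr /=.
rewrite exchange_big_nat; apply: eq_bigr => k _.
rewrite rmorph_sum big_distrr; apply: eq_bigr => j _.
by rewrite rmorphM /= mulrCA.
Qed.

Definition toR (R : comNzRingType) (x : 'cV[int]_rk) : 'cV[R]_rk := map_mx intr x.
Arguments toR {R} x.

Lemma bf_toR (R : comNzRingType) d x y : bf d (toR x) (toR y) = (LformZ d x y)%:~R :> R.
Proof. exact: (bform_map (intr : {rmorphism int -> R})). Qed.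

Lemma toR_evec (R : comNzRingType) j : toR (evec j) = evec j :> 'cV[R]_rk.
Proof. exact: map_delta_mx. Qed.

Lemma LformZ_bf d x y : LformZ d x y = bf d x y.
Proof.
rewrite /LformZ /bform; congr ((_ *m _ *m _) 0 0).
by apply/matrixP => i j; rewrite [RHS]mxE intz.
Qed.

Lemma bf_map (R S : comNzRingType) (f : {rmorphism R -> S}) d (x y : 'cV[R]_rk) :
  bf d (map_mx f x) (map_mx f y) = f (bf d x y).
Proof.
rewrite -bform_map; congr bform.
by apply/matrixP => i j; rewrite !mxE rmorph_int.
Qed.

Section Reflection.
Variables (d : nat) (r : 'cV[int]_rk).
Hypothesis r_OL : in_OL d (refl_mx d r).

Lemma refl_mx_act (K : numFieldType) (v : 'cV[K]_rk) :
  map_mx ratr (refl_mx d r) *m v = refl_path (map_mx intr (gram d)) (toR r) 1 v.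
Proof.
have ratr_intmx n m (A : 'M[int]_(n, m)) :
    map_mx ratr (map_mx intr A) = map_mx intr A :> 'M[K]_(n, m).
  by apply/matrixP => i j; rewrite !mxE ratr_int.
rewrite /refl_mx map_mxB map_mx1 map_mxZ !map_mxM /= map_trmx !ratr_intmx.
rewrite mulmxBl mul1mx -scalemxAl -!mulmxA -/(toR r).
rewrite [X in toR r *m X]mx11_scalar.
rewrite mul_mx_scalar scalerA fmorph_div rmorph_nat rmorph_int -bf_toR.
rewrite mulmxA (_ : (_ *m _ *m v) 0 0 = bf d (toR r) v).
  rewrite (bform_sym (gram_sym _ _) (toR r)).
  by rewrite /refl_path; congr (_ - _ *: _); ring.
by rewrite /bform; congr ((_ *m _ *m _) 0 0); apply/matrixP => i j; rewrite !mxE.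
Qed.

(* The entries of -sigma_r are integers by r_OL; numq reads them in int. *)
Definition neg_refl : 'M[int]_rk := map_mx numq (- refl_mx d r).

Lemma neg_reflE : map_mx intr neg_refl = - refl_mx d r.
Proof.
apply/matrixP => i j; have [_ r_int _] := r_OL; have [y ry] := r_int (delta_mx j 0).
have /matrixP/(_ i 0) := ry; rewrite /toQ map_delta_mx -colE !mxE => ->.
by rewrite -rmorphN numq_int.
Qed.

Lemma neg_refl_act (K : numFieldType) (v : 'cV[K]_rk) :
  map_mx intr neg_refl *m v = - refl_path (map_mx intr (gram d)) (toR r) 1 v.
Proof.
have -> : map_mx intr neg_refl = map_mx ratr (map_mx intr neg_refl) :> 'M[K]_rk.
  by apply/matrixP => i j; rewrite !mxE ratr_int.
by rewrite neg_reflE map_mxN mulNmx refl_mx_act.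
Qed.

Lemma neg_refl_iso : neg_refl^T *m gram d *m neg_refl = gram d.
Proof.
suff /matrixP eq_rat : map_mx intr (neg_refl^T *m gram d *m neg_refl) =
                       map_mx intr (gram d) :> 'M[rat]_rk.
  by apply/matrixP => i j; apply: (@intr_inj rat); move: (eq_rat i j); rewrite !mxE.
rewrite !map_mxM -map_trmx neg_reflE mulmxN [(- _)^T]raddfN !mulNmx opprK.
by case: r_OL.
Qed.

Lemma neg_refl_det : LformZ d r r != 0 -> \det neg_refl = 1.
Proof.
move=> r_anisotropic; apply: (@intr_inj rat).
have rr_neq0 : (LformZ d r r)%:~R != 0 :> rat by rewrite intr_eq0.
rewrite -det_map_mx neg_reflE -scaleN1r detZ /refl_mx -mulmxA scalemxAl det_rank1.
rewrite -scalemxAr mxE -/(bform _ _ _) -/(toR r) (bf_toR rat d r r) (divfK rr_neq0).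
by rewrite /rk; ring.
Qed.

End Reflection.

Lemma int_colP (v : 'cV[rat]_rk) :
  (forall i, v i 0 \is a Num.int) -> exists u, v = toQ u.
Proof.
move=> v_int; exists (map_mx numq v); apply/matrixP => i j.
by rewrite (ord1 j) !mxE; have /intrP[z ->] := v_int i; rewrite numq_int.
Qed.

Lemma primitive_scale_int (r w : 'cV[int]_rk) (q : rat) :
  primitive r -> q *: toQ r = toQ w -> q \is a Num.int.
Proof.
move=> r_prim qr_w.
have den_coprime : coprimez (denq q) (numq q).
  by rewrite /coprimez /gcdz gcdnC; apply: coprime_num_den.
pose s := \col_i divz (r i 0) (denq q).
suff r_eq : r = denq q *: s.
  move: (r_prim _ _ r_eq); rewrite gtr0_norm ?denq_gt0 // => den1.
  by rewrite -(divq_num_den q) den1 divr1 intr_int.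
apply/matrixP => i j; rewrite (ord1 j) !mxE mulrC divzK //.
rewrite -(Gauss_dvdzr _ den_coprime); apply/dvdzP; exists (w i 0).
apply: (@intr_inj rat); move/matrixP/(_ i 0): qr_w; rewrite !mxE => qr_w.
by rewrite !rmorphM /= -qr_w numqE; ring.
Qed.

Section DualLattice.
Variables (d : nat) (v : 'cV[rat]_rk).
Hypothesis v_dual : in_dual d v.

Lemma dual_pairing_int (w : 'cV[int]_rk) : bf d v (toR w) \is a Num.int.
Proof.
by have [z vw] := v_dual w; rewrite -[bf d v _]/(LformQ d v (toQ w)) vw intr_int.
Qed.

Lemma dual_coord_int i : (i < 20)%N -> coord v i \is a Num.int.
Proof.
move=> lt_i20; rewrite (coord_of_pairings d) //.
apply: rpred_sum => j _; rewrite rpredM ?intr_int // -(toR_evec _ j).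
exact: dual_pairing_int.
Qed.

End DualLattice.

Definition cpx (A B : 'cV[RR]_rk) : 'cV[C]_rk := \col_i Complex (A i 0) (B i 0).

Definition realC (x : 'cV[RR]_rk) : 'cV[C]_rk := map_mx (real_complex RR) x.

Lemma cpx_ReIm (Z : 'cV[C]_rk) :
  Z = cpx (map_mx (@complex.Re RR) Z) (map_mx (@complex.Im RR) Z).
Proof. by apply/matrixP => i j; rewrite (ord1 j) !mxE; case: (Z i 0). Qed.

Lemma cpxE A B : cpx A B = realC A + 'i *: realC B.
Proof.
by apply/matrixP => i j; rewrite (ord1 j) !mxE -complexiE; simpc.
Qed.

Lemma bf_cpx_realC d A B x :
  bf d (cpx A B) (realC x) = Complex (bf d A x) (bf d B x).
Proof.
rewrite cpxE bformDl bformZl /realC !bf_map.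
by rewrite -complexiE; simpc.
Qed.

Lemma bf_cpx d A B A' B' :
  bf d (cpx A B) (cpx A' B') =
  Complex (bf d A A' - bf d B B') (bf d B A' + bf d A B').
Proof.
rewrite [cpx A' B']cpxE bformDr bformZr !bf_cpx_realC -complexiE; simpc.
by congr Complex; ring.
Qed.

Lemma conj_cpx A B : map_mx Num.conj (cpx A B) = cpx A (- B).
Proof. by apply/matrixP => i j; rewrite !mxE. Qed.

Lemma p1E : p1 = realC plane1.
Proof.
apply/matrixP => i j; rewrite (ord1 j) !mxE -!val_eqE /= !inordK //.
by case: i => [[|[|i]] ?] /=; rewrite ?addr0 ?add0r ?rmorph1 ?rmorph0.
Qed.

Lemma p2E : p2 = realC plane2.
Proof.
apply/matrixP => i j; rewrite (ord1 j) !mxE -!val_eqE /= !inordK //.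
by case: i => [[|[|[|[|i]]]] ?] /=; rewrite ?addr0 ?add0r ?rmorph1 ?rmorph0.
Qed.

Definition real_cone d (A B : 'cV[RR]_rk) : Prop :=
  [/\ bf d A A = bf d B B, bf d A B = 0, 0 < bf d A A + bf d B B
    & 0 < orient (map_mx intr (gram d)) plane1 plane2 A B].

Lemma in_cone_cpx d A B : in_cone d (cpx A B) <-> real_cone d A B.
Proof.
rewrite /in_cone /LformC -!/(bform _ _ _) conj_cpx !bf_cpx p1E p2E !bf_cpx_realC.
rewrite -!complexRe -!complexIm /= !bformNr (bf_sym _ B A) opprK subrr.
have cpx_eq0 x y : (Complex x y = 0 :> C) <-> (x = 0 /\ y = 0).
  by split; [case | case=> -> ->].
rewrite ltcE /= eqxx -!rmorphM -rmorphB /= -[0 : C]/((0 : RR)%:C)%C ltcR.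
split => [[/cpx_eq0[AB_eq AB_orth] pos or_pos] | [AB_eq AB_orth pos or_pos]].
  split => //; first by apply/eqP; rewrite -subr_eq0 AB_eq.
  by move/eqP: AB_orth; rewrite -mulr2n mulrn_eq0 => /eqP.
by split => //; apply/cpx_eq0; rewrite AB_eq subrr AB_orth addr0.
Qed.

Lemma toCm_cpx (g : 'M[int]_rk) A B :
  toCm g *m cpx A B = cpx (map_mx intr g *m A) (map_mx intr g *m B).
Proof.
have -> : toCm g = map_mx (real_complex RR) (map_mx intr g).
  by apply/matrixP => i j; rewrite !mxE rmorph_int.
by rewrite !cpxE mulmxDr -scalemxAr /realC !map_mxM.
Qed.

Section ReflectiveVector.
Variables (d : nat) (r : 'cV[int]_rk).
Hypotheses (d_gt0 : (0 < d)%N) (r_prim : primitive r)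
  (r_norm : LformZ d r r = - ((2 * d)%N : int)) (r_OL : in_OL d (refl_mx d r)).

Lemma d_neq0 : d%:R != 0 :> rat.
Proof. by rewrite pnatr_eq0 -lt0n. Qed.

Lemma refl_mx_toQ x :
  refl_mx d r *m toQ x = toQ x + ((LformZ d x r)%:~R / d%:R) *: toQ r.
Proof.
have := neg_refl_act r_OL (toQ x); rewrite (neg_reflE r_OL) mulNmx => /oppr_inj ->.
rewrite /refl_path -[toQ x]/(toR x) -[toQ r]/(toR r) !bf_toR r_norm -scaleNr.
congr (_ + _ *: _).
rewrite rmorphN /= -[X in _ / - X]/((2 * d)%:R : rat) natrM.
by field; rewrite d_neq0.
Qed.

Lemma reflective_dvd_pairing x : ((d : int) %| LformZ d x r)%Z.
Proof.
have [_ OL_in _] := r_OL; have [y] := OL_in x; rewrite refl_mx_toQ => xy.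
have : ((LformZ d x r)%:~R / d%:R) *: toQ r = toQ (y - x).
  by rewrite /toQ map_mxB -/(toQ y) -/(toQ x) -xy addrC addKr.
move/(primitive_scale_int r_prim)/intrP => [z xr_z].
apply/dvdzP; exists z; apply: (@intr_inj rat).
by rewrite rmorphM /= -xr_z divfK ?d_neq0.
Qed.

Lemma reflective_coord_dvd i : (i < 20)%N -> ((d : int) %| coord r i)%Z.
Proof.
move=> lt_i20; pose v : 'cV[rat]_rk := d%:R^-1 *: toQ r.
have v_dual : in_dual d v.
  move=> w; have [z wr_z] := dvdzP (reflective_dvd_pairing w).
  exists z; rewrite -[LformQ d v _]/(bf d v (toR w)) bformZl -[toQ r]/(toR r) bf_toR.
  by rewrite LformZ_bf bf_sym -LformZ_bf wr_z rmorphM /= mulrCA mulVf ?mulr1 ?d_neq0.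
have /intrP[z v_z] := dual_coord_int v_dual lt_i20.
apply/dvdzP; exists z; apply: (@intr_inj rat); rewrite rmorphM /= -v_z.
by rewrite /coord !mxE mulrAC mulVf ?d_neq0 ?mul1r.
Qed.

Lemma reflective_decomp :
  exists2 s : 'cV[int]_rk, coord s 20 = 0 & r = (d : int) *: s + coord r 20 *: evec 20.
Proof.
exists (\col_i if (i < 20)%N then divz (r i 0) d else 0).
  by rewrite /coord mxE inordK.
apply/matrixP => i j; rewrite (ord1 j) !mxE; case: ltnP => [lt_i20|ge_i20].
  have := reflective_coord_dvd lt_i20; rewrite /coord inord_val => r_dvd.
  by rewrite mulrC divzK // ord_lt20_neq //= mulr0 addr0.
rewrite (ord_ge20 ge_i20).
by rewrite /coord eqxx mulr0 add0r mulr1.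
Qed.

Lemma reflective_sqr_cong : ((d : int) %| coord r 20 ^+ 2 - 1)%Z.
Proof.
have [s s20 r_eq] := reflective_decomp; set m := coord r 20 in r_eq *.
have [t s_even] := dvdzP (bform_even (gram_trmx d) (gram_diag_even d) s).
rewrite -[bform _ s s]/(LformZ d s s) LformZ_bf in s_even.
have se : bf d s (evec 20) = 0 by rewrite bf_evec20 s20 mulr0.
have ee : bf d (evec 20) (evec 20) = - ((2 * d)%N : int).
  by rewrite bf_evec20 /coord /evec mxE eqxx mulr1 natz.
move: r_norm; rewrite LformZ_bf r_eq !bformDl !bformDr !bformZl !bformZr.
rewrite (bf_sym _ (evec 20) s) se ee s_even.
move/eqP; rewrite -subr_eq0 => /eqP norm0.
apply/dvdzP; exists t; apply: (mulfI (_ : ((2 * d)%N : int) != 0)).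
  by rewrite gt_eqF // ltz_nat muln_gt0 d_gt0.
by apply/eqP; rewrite -subr_eq0 -oppr_eq0 -norm0; apply/eqP; ring.
Qed.

Lemma neg_refl_discr : acts_trivially_on_discr d (neg_refl d r).
Proof.
move=> v v_dual; apply: int_colP => i.
have [s s20 r_eq] := reflective_decomp; set m := coord r 20 in r_eq *.
have [t m_sqr] := dvdzP reflective_sqr_cong.
set N := bf d v (toR r); set n := bf d v (evec 20).
have N_eq : N = d%:R * bf d v (toR s) + m%:~R * n.
  rewrite /N r_eq /toR map_mxD !map_mxZ bformDr !bformZr.
  by rewrite -/(toR s) -/(toR (evec 20)) toR_evec.
have N_int : N \is a Num.int := dual_pairing_int v_dual r.
have n_int : n \is a Num.int by rewrite /n -(toR_evec _ 20) dual_pairing_int.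
rewrite (neg_refl_act r_OL) /refl_path !mxE bf_toR r_norm -/N mul1r.
rewrite rmorphN /= -[X in _ / - X]/((2 * d)%:R : rat) natrM.
have r_i : (r i 0)%:~R = d%:R * (s i 0)%:~R + m%:~R * (evec 20 : 'cV[rat]_rk) i 0.
  by rewrite {1}r_eq !mxE rmorphD !rmorphM /=; case: (_ && _).
rewrite r_i; case: (ltnP i 20) => [lt_i20|ge_i20].
  have v_i : v i 0 \is a Num.int.
    by have := dual_coord_int v_dual lt_i20; rewrite /coord inord_val.
  rewrite mxE ord_lt20_neq //= mulr0 addr0.
  rewrite (_ : _ - _ = - (2 * v i 0) - N * (s i 0)%:~R).
    by rewrite rpredB ?rpredN ?rpredM ?rpred_nat ?intr_int.
  by field; rewrite d_neq0.
rewrite (ord_ge20 ge_i20).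
have v20 : v (inord 20) 0 = - n / (2 * d%:R).
  by rewrite /n bf_evec20 /coord natrM; field; rewrite d_neq0.
have t_eq : t%:~R = ((m%:~R) ^+ 2 - 1) / d%:R :> rat.
  by rewrite -[m%:~R ^+ 2]rmorphXn -[1]/(1%:~R) -rmorphB m_sqr rmorphM mulfK ?d_neq0.
rewrite mxE eqxx v20 (_ : _ - _ = - (m%:~R * bf d v (toR s) + n * t%:~R)).
  by rewrite rpredN rpredD ?rpredM ?intr_int ?dual_pairing_int.
rewrite N_eq t_eq -[s (inord 20) 0]/(coord s 20) s20 /=.
by field; rewrite d_neq0.
Qed.

Local Notation g := (map_mx intr (neg_refl d r) : 'M[RR]_rk).

Lemma r_anisotropic : LformZ d r r != 0.
Proof. by rewrite r_norm oppr_eq0 gt_eqF // ltz_nat muln_gt0 d_gt0. Qed.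

Lemma real_cone_neg_refl A B : real_cone d A B <-> real_cone d (g *m A) (g *m B).
Proof.
have g_iso x y : bf d (g *m x) (g *m y) = bf d x y.
  apply: bform_iso; have := congr1 (map_mx (intr : int -> RR)) (neg_refl_iso r_OL).
  by rewrite !map_mxM -map_trmx.
have rr_neg : bf d (toR r) (toR r) < 0 :> RR.
  by rewrite bf_toR r_norm rmorphN /= oppr_lt0 ltr0z ltz_nat muln_gt0 d_gt0.
have orient_pos_iff (A' B' : 'cV[RR]_rk) : bf d A' A' = bf d B' B' -> bf d A' B' = 0 ->
    0 < bf d A' A' + bf d B' B' ->
    (0 < orient (map_mx intr (gram d)) plane1 plane2 A' B') =
    (0 < orient (map_mx intr (gram d)) plane1 plane2
           (refl_path (map_mx intr (gram d)) (toR r) 1 A')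
           (refl_path (map_mx intr (gram d)) (toR r) 1 B')).
  move=> AB_eq AB_orth pos.
  apply: (orient_refl_pos (gram_sym _ _) (@bf_perp_plane_nonpos _ d) rr_neg AB_eq AB_orth).
  by move: pos; rewrite -AB_eq; lra.
rewrite /real_cone !g_iso !(@neg_refl_act d r r_OL RR) orientNN.
split=> -[AB_eq AB_orth pos or_pos]; split => //.
  by rewrite -orient_pos_iff.
by rewrite orient_pos_iff.
Qed.

Lemma neg_refl_SOtilde : in_SOtilde_plus d (neg_refl d r).
Proof.
split.
- exact: neg_refl_iso.
- exact: neg_refl_det r_anisotropic.
- move=> Z; rewrite [in X in _ <-> X](cpx_ReIm Z) toCm_cpx {1}(cpx_ReIm Z).
  by rewrite !in_cone_cpx real_cone_neg_refl.
- exact: neg_refl_discr.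
Qed.

End ReflectiveVector.

Theorem lemma6p2 (d k : nat) (F : 'cV[C]_rk -> C) :
  (0 < d)%N ->
  modular_form d (2 * k + 1) F ->
  forall r : 'cV[int]_rk,
    primitive r ->
    LformZ d r r = - ((2 * d)%N : int) ->
    in_OL d (refl_mx d r) ->
    forall Z : 'cV[C]_rk, in_cone d Z -> LformC d Z (toC r) = 0 -> F Z = 0.
Proof.
move=> d_gt0 [_ F_hom F_inv] r r_prim r_norm r_OL Z Z_cone Zr.
have gZ : toCm (neg_refl d r) *m Z = - Z.
  rewrite /toCm (@neg_refl_act d r r_OL C) /refl_path.
  by rewrite (_ : bf d Z (toR r) = 0) // mulr0 mul0r mulr0 scale0r subr0.
have F_even : F (- Z) = F Z.
  by rewrite -gZ F_inv //; apply: neg_refl_SOtilde.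
have F_odd : F (- Z) = - F Z.
  rewrite -scaleN1r F_hom ?oppr_eq0 ?oner_eq0 // exprD expr1 exprM sqrrN !expr1n.
  by rewrite mul1r invrN invr1 mulN1r.
have : F Z *+ 2 = 0 by rewrite mulr2n -{1}F_even F_odd addNr.
by move/eqP; rewrite mulrn_eq0 /= => /eqP.
Qed.
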